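(* Let $G$ be a triangle-free graph and $n\ge 1$. Then every induced subgraph of $KB(G)$ isomorphic to $K_{1,n}$ is contained in a (not necessarily induced) subgraph of $KB(G)$ isomorphic to $(D_n)^2$ or to $(D_n^-)^2$.
   Context: All graphs are finite and simple. A biclique of a graph $G$ is a set $P\subseteq V(G)$ such that the induced subgraph $G[P]$ is a complete bipartite graph with both parts nonempty, and $P$ is inclusion-maximal with this property. The biclique graph $KB(G)$ has the set of bicliques of $G$ as vertex set, two distinct bicliques being adjacent iff they intersect. For a graph $H$, the square $H^2$ has vertex set $V(H)$, two distinct vertices being adjacent iff their distance in $H$ is at most $2$. $D_n$ is the graph with vertex set $\{v,u_1,\dots,u_n,w_1,\dots,w_n\}$ and edge set $\{vu_i:1\le i\le n\}\cup\{u_iw_i:1\le i\le n\}$, and $D_n^-$ is the graph $D_n-w_n$ obtained by deleting the vertex $w_n$. *)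

From mathcomp Require Import all_boot.
Unset Strict Implicit. Unset Printing Implicit Defensive.

(* A finite simple graph: vertex type T : finType, edge relation e : rel T,
   assumed symmetric and irreflexive in the theorem. *)

Definition triangle_free {T : finType} (e : rel T) : Prop :=
  forall x y z : T, ~ [&& e x y, e y z & e x z].

Definition complete_bip {T : finType} (e : rel T) (P : {set T}) : Prop :=
  exists X Y : {set T},
    [/\ X != set0, Y != set0, [disjoint X & Y], X :|: Y = P &
     [/\ forall x y, x \in X -> y \in Y -> e x y,
         forall x y, x \in X -> y \in X -> ~~ e x y
       & forall x y, x \in Y -> y \in Y -> ~~ e x y]].

Definition biclique {T : finType} (e : rel T) (P : {set T}) : Prop :=
  complete_bip e P /\ forall Q : {set T}, P \proper Q -> ~ complete_bip e Q.

Definition KBadj {T : finType} (P Q : {set T}) : bool :=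
  (P != Q) && (P :&: Q != set0).

(* The graph D_n: None = v, Some (inl i) = u_i, Some (inr i) = w_i
   (indices 0..n-1 instead of 1..n). *)
Definition Dvert (n : nat) : finType := option ('I_n + 'I_n)%type.

Definition Dadj {n : nat} (x y : Dvert n) : bool :=
  match x, y with
  | None, Some (inl _) | Some (inl _), None => true
  | Some (inl i), Some (inr j) | Some (inr j), Some (inl i) => i == j
  | _, _ => false
  end.

(* Vertex set: full = true gives D_n, full = false gives D_n^- = D_n - w_n
   (w_n is Some (inr i) with val i = n - 1). *)
Definition Dvs (n : nat) (full : bool) (x : Dvert n) : bool :=
  match x with
  | Some (inr j) => full || (val j != n.-1)
  | _ => true
  end.

Definition Dsq (n : nat) (full : bool) (x y : Dvert n) : bool :=
  [&& Dvs n full x, Dvs n full y, x != y &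
      Dadj x y || [exists z, [&& Dvs n full z, Dadj x z & Dadj z y]]].

From mathcomp Require Import all_boot fingroup perm.

Local Set Implicit Arguments.

(* In a triangle-free graph every biclique P splits as P = X :|: Y where each
   side is the common neighbourhood of the other (Y = cn X, X = cn Y); such a
   pair of "closed sides" determines a biclique and conversely.  Say that P
   covers R when P contains a whole side of R.  Two facts drive the proof:
   covering is symmetric between bicliques, and two bicliques covering the
   same biclique intersect.

   For a star c; L 0, ..., L (n-1) of KB(G), pick p_i in c :&: L i and let
   m_i be the star biclique of p_i (its neighbourhood and the common
   neighbourhood of that).  Then m_i covers both c and L i, so the sets
   c, m_i, L_i realise (D_n)^2 with v |-> c, u_i |-> m_i, w_i |-> L_i.  This
   fails only if some m_k coincides with c or L_k; then L_k covers c, which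
   can happen for at most one k, and mapping u_k |-> L_k (with w_k removed)
   realises (D_n^-)^2 instead. *)

Definition meets {T : finType} (P Q : {set T}) : bool := P :&: Q != set0.

Section Bicliques.
Variables (T : finType) (e : rel T).
Hypotheses (e_sym : symmetric e) (e_irr : irreflexive e) (e_tf : triangle_free e).
Implicit Types (A B P Q R X Y : {set T}) (x y z : T).

Definition cn A : {set T} := [set z | [forall a in A, e a z]].

Lemma cnP A z : reflect (forall a, a \in A -> e a z) (z \in cn A).
Proof. by rewrite inE; apply: forall_inP. Qed.

Lemma cn_anti A B : A \subset B -> cn B \subset cn A.
Proof.
by move=> sAB; apply/subsetP=> z /cnP zB; apply/cnP=> a /(subsetP sAB); apply: zB.
Qed.

Lemma sub_cncn A : A \subset cn (cn A).
Proof. by apply/subsetP=> a aA; apply/cnP=> z /cnP za; rewrite e_sym; apply: za. Qed.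

Lemma cn3 A : cn (cn (cn A)) = cn A.
Proof. by apply/eqP; rewrite eqEsubset sub_cncn andbT cn_anti ?sub_cncn. Qed.

Lemma cn_indep Y z1 z2 : Y != set0 -> z1 \in cn Y -> z2 \in cn Y -> ~~ e z1 z2.
Proof.
case/set0Pn=> y yY /cnP y_z1 /cnP y_z2; apply/negP=> z12.
by apply: (e_tf y z1 z2); rewrite (y_z1 y) // (y_z2 y) // z12.
Qed.

Definition sides R X Y : Prop :=
  [/\ X != set0, Y != set0, R = X :|: Y, Y = cn X & X = cn Y].

Lemma sides_sym R X Y : sides R X Y -> sides R Y X.
Proof. by case=> nX nY -> hY hX; split; rewrite // setUC. Qed.

(* In a maximal complete bipartite set, each part is the common neighbourhood
   of the other: a common neighbour z of X outside Y could be added to Y. *)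
Lemma maximal_side P X Y : (forall Q, P \proper Q -> ~ complete_bip e Q) ->
  X != set0 -> Y != set0 -> [disjoint X & Y] -> X :|: Y = P ->
  (forall x y, x \in X -> y \in Y -> e x y) ->
  (forall x y, x \in X -> y \in X -> ~~ e x y) ->
  (forall x y, x \in Y -> y \in Y -> ~~ e x y) -> Y = cn X.
Proof.
move=> Pmax nX nY dXY UP cXY iX iY; apply/setP=> z; apply/idP/idP.
  by move=> zY; apply/cnP=> a aX; apply: cXY.
move=> /cnP zX; apply/negPn/negP=> zNY.
have zNX : z \notin X by apply/negP=> zX'; move: (zX z zX'); rewrite e_irr.
case/set0Pn: (nX) => x0 x0X.
apply: (Pmax (X :|: (z |: Y))).
  rewrite properE -UP setUS ?subsetUr //=; apply/subsetPn; exists z.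
    by rewrite !inE eqxx orbT.
  by rewrite inE (negbTE zNX) (negbTE zNY).
exists X, (z |: Y); split=> //.
- by apply/set0Pn; exists z; rewrite !inE eqxx.
- apply/pred0P=> w /=; rewrite !inE; apply/negP=> /andP[wX /orP[/eqP wz|wY]].
    by rewrite -wz wX in zNX.
  by rewrite (disjointFr dXY wX) in wY.
- split=> //.
  + by move=> x y xX; rewrite !inE => /orP[/eqP->|]; [exact: zX | exact: cXY].
  + move=> x y; rewrite !inE => /orP[/eqP->|xY] /orP[/eqP->|yY]; last exact: iY.
    * by rewrite e_irr.
    * apply/negP=> zy; apply: (e_tf x0 y z).
      by rewrite cXY // (e_sym y) zy zX.
    * apply/negP=> xz; apply: (e_tf x0 x z).
      by rewrite cXY // xz zX.
Qed.

Lemma biclique_sides P : biclique e P -> exists X Y, sides P X Y.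
Proof.
case=> [[X [Y [nX nY dXY UP [cXY iX iY]]]] Pmax].
have cYX y x : y \in Y -> x \in X -> e y x by move=> yY xX; rewrite e_sym cXY.
exists X, Y; split; rewrite // -?UP.
  exact: (maximal_side Pmax).
by apply: (maximal_side Pmax); rewrite // 1?disjoint_sym // setUC.
Qed.

Lemma sides_absorb X Y X' Y' x0 :
  Y = cn X -> X = cn Y -> Y != set0 ->
  (forall x y, x \in X' -> y \in Y' -> e x y) ->
  (forall x y, x \in X' -> y \in X' -> ~~ e x y) ->
  (forall x y, x \in Y' -> y \in Y' -> ~~ e x y) ->
  X :|: Y \subset X' :|: Y' -> x0 \in X -> x0 \in X' ->
  X' :|: Y' \subset X :|: Y.
Proof.
move=> hY hX nY cXY' iX' iY' sub x0X x0X'.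
have YY' y : y \in Y -> y \in Y'.
  move=> yY; have := subsetP sub y; rewrite !inE yY orbT => /(_ isT) /orP[yX'|//].
  have : e x0 y by move: yY; rewrite hY => /cnP; apply.
  by rewrite (negbTE (iX' _ _ x0X' yX')).
case/set0Pn: nY => y0 y0Y.
have XX' x : x \in X -> x \in X'.
  move=> xX; have := subsetP sub x; rewrite !inE xX => /(_ isT) /orP[//|xY'].
  have : e x y0 by move: y0Y; rewrite hY => /cnP; apply.
  by rewrite (negbTE (iY' _ _ xY' (YY' _ y0Y))).
apply/subsetP=> z; rewrite !inE => /orP[zX'|zY'].
  by rewrite hX; apply/orP; left; apply/cnP=> a /YY' aY'; rewrite e_sym cXY'.
by rewrite hY; apply/orP; right; apply/cnP=> a /XX' aX'; rewrite cXY'.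
Qed.

Lemma sides_biclique P X Y : sides P X Y -> biclique e P.
Proof.
case=> nX nY -> hY hX; split.
  exists X, Y; split=> //.
  - apply/pred0P=> z /=; apply/negP=> /andP[zX]; rewrite hY => /cnP /(_ z zX).
    by rewrite e_irr.
  - split; first by move=> x y xX; rewrite hY => /cnP; apply.
      by rewrite hX => x y; apply: cn_indep.
    by rewrite hY => x y; apply: cn_indep.
move=> Q; rewrite properE => /andP[sPQ nQP] [X' [Y' [_ _ _ UQ [cXY' iX' iY']]]].
case/set0Pn: (nX) => x0 x0X; rewrite -UQ in sPQ nQP.
have : x0 \in X' :|: Y' by rewrite (subsetP sPQ) // inE x0X.
rewrite inE => /orP[x0X'|x0Y'].
  by move: nQP; rewrite (sides_absorb hY hX nY cXY' iX' iY' sPQ x0X x0X').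
have cYX' x y : x \in Y' -> y \in X' -> e x y by move=> xY yX; rewrite e_sym cXY'.
rewrite [X' :|: Y']setUC in sPQ nQP.
by move: nQP; rewrite (sides_absorb hY hX nY cYX' iY' iX' sPQ x0X x0Y').
Qed.

Definition covers P R : Prop := exists X Y, sides R X Y /\ X \subset P.

(* If a closed side X of R lies in P = A :|: B, then R swallows a side of P:
   picking x0 in X, the side of P not containing x0 consists of common
   neighbours of X. *)
Lemma side_inclusion P A B X Y R : sides P A B -> sides R X Y -> X \subset P ->
  B \subset Y \/ A \subset Y.
Proof.
have swallow A' B' x0 : sides (A' :|: B') A' B' -> Y = cn X -> X = cn Y ->
    Y != set0 -> X \subset A' :|: B' -> x0 \in X -> x0 \in A' -> B' \subset Y.
  case=> _ _ _ hB hA hY hX nY sub x0X x0A; apply/subsetP=> b bB.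
  rewrite hY; apply/cnP=> x xX; have := subsetP sub x xX; rewrite inE.
  case/orP=> [xA|xB]; first by move: bB; rewrite hB => /cnP; apply.
  have : e x0 x by move: xB; rewrite hB => /cnP; apply.
  by rewrite hX in x0X xX; rewrite (negbTE (cn_indep nY x0X xX)).
move=> sP [nX nY _ hY hX] sub; case/set0Pn: (nX) => x0 x0X.
have [_ _ UP _ _] := sP; rewrite UP in sub sP.
have := subsetP sub x0 x0X; rewrite inE => /orP[x0A|x0B].
  by left; apply: (swallow A B x0).
by right; apply: (swallow B A x0); rewrite // setUC; first apply: sides_sym.
Qed.

Lemma covers_sym P R : biclique e P -> covers P R -> covers R P.
Proof.
move=> /biclique_sides [A [B sP]] [X [Y [sR sub]]].
have [_ _ -> _ _] := sR.
case: (side_inclusion sP sR sub) => sY.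
  by exists B, A; split; [apply: sides_sym | apply: subset_trans sY (subsetUr _ _)].
by exists A, B; split; last apply: subset_trans sY (subsetUr _ _).
Qed.

Lemma side_sub R X Y X' Y' y : sides R X Y -> sides R X' Y' ->
  y \in X' -> y \in Y -> Y \subset X'.
Proof.
case=> nX _ UR hY _ [_ _ UR' hY' _] yX' yY; apply/subsetP=> z zY.
have : z \in R by rewrite UR inE zY orbT.
rewrite UR' inE => /orP[//|zY'].
have : e y z by move: zY'; rewrite hY' => /cnP; apply.
by rewrite hY in yY zY; rewrite (negbTE (cn_indep nX yY zY)).
Qed.

Lemma covers_meet P Q R : biclique e P -> covers P R -> covers Q R -> meets P Q.
Proof.
move=> bP [X [Y [sR sP]]] [X' [Y' [sR' sQ]]].
have [nX' _ UR' _ _] := sR'; have [_ _ UR _ _] := sR.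
case/set0Pn: nX' => z zX'.
have : z \in R by rewrite UR' inE zX'.
rewrite UR inE => /orP[zX|zY].
  by apply/set0Pn; exists z; rewrite inE (subsetP sP) // (subsetP sQ).
have YQ := subset_trans (side_sub sR sR' zX' zY) sQ.
have [A [B sPAB]] := biclique_sides bP; have [nA nB UP _ _] := sPAB.
case: (side_inclusion sPAB sR sP) => sY.
  case/set0Pn: nB => b bB; apply/set0Pn; exists b.
  by rewrite inE UP inE bB orbT (subsetP YQ) // (subsetP sY).
case/set0Pn: nA => a aA; apply/set0Pn; exists a.
by rewrite inE UP inE aA (subsetP YQ) // (subsetP sY).
Qed.

Definition nbr x : {set T} := [set z | e x z].
Definition star x : {set T} := cn (nbr x) :|: nbr x.

Lemma nbr_cn x : nbr x = cn [set x].
Proof.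
apply/setP=> z; rewrite inE; apply/idP/cnP; last by apply; rewrite inE.
by move=> xz a; rewrite inE => /eqP->.
Qed.

Lemma star_sides x : nbr x != set0 -> sides (star x) (cn (nbr x)) (nbr x).
Proof.
move=> nN; split=> //; last by rewrite nbr_cn cn3.
by apply/set0Pn; exists x; apply/cnP=> a; rewrite inE e_sym.
Qed.

Lemma star_mem x : x \in star x.
Proof. by rewrite inE; apply/orP; left; apply/cnP=> a; rewrite inE e_sym. Qed.

(* The star biclique of any vertex x of a biclique R covers R: the side of R
   opposite to x lies in the neighbourhood of x. *)
Lemma star_covers R X Y x : sides R X Y -> x \in R ->
  biclique e (star x) /\ covers (star x) R.
Proof.
have key X' Y' : sides R X' Y' -> x \in X' ->
    biclique e (star x) /\ covers (star x) R.
  move=> sR' xX'; have [_ nY' _ hY' _] := sR'.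
  have sub : Y' \subset nbr x.
    by apply/subsetP=> y; rewrite hY' => /cnP yx; rewrite inE yx.
  split.
    apply: sides_biclique; apply: star_sides.
    by case/set0Pn: nY' => y yY; apply/set0Pn; exists y; apply: (subsetP sub).
  by exists Y', X'; split; [apply: sides_sym | apply: subset_trans sub (subsetUr _ _)].
move=> sR xR; have [_ _ UR _ _] := sR.
have : x \in X :|: Y by rewrite -UR.
case/setUP=> [xX|xY]; first exact: (key X Y).
by apply: (key Y X) => //; apply: sides_sym.
Qed.

End Bicliques.

Arguments star {T} e x.

Section SquareOfD.
Variables (n : nat) (full : bool).

Lemma Dsq_edge (R : rel (Dvert n)) : symmetric R ->
  (forall i, R None (Some (inl i))) ->
  (forall i, Dvs n full (Some (inr i)) -> R None (Some (inr i))) ->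
  (forall i j, i != j -> R (Some (inl i)) (Some (inl j))) ->
  (forall i, Dvs n full (Some (inr i)) -> R (Some (inl i)) (Some (inr i))) ->
  forall x y, Dsq n full x y -> R x y.
Proof.
move=> Rsym vu vw uu uw.
have uwE i j : Dsq n full (Some (inl i)) (Some (inr j)) -> i = j.
  by case/and4P=> _ _ _ /orP[/eqP //|/existsP[[[z|z]|]]] /=; rewrite ?andbF.
have wuE i j : Dsq n full (Some (inr i)) (Some (inl j)) -> i = j.
  by case/and4P=> _ _ _ /orP[/eqP -> //|/existsP[[[z|z]|]]] /=; rewrite ?andbF.
case=> [[i|i]|] [[j|j]|] Dxy; have [Dx Dy xy _] := and4P Dxy.
- exact: uu.
- by move: Dy; rewrite -(uwE _ _ Dxy); apply: uw.
- by rewrite Rsym vu.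
- by rewrite Rsym -(wuE _ _ Dxy) uw.
- move: xy; case/and4P: Dxy => _ _ _ /orP[//|/existsP[[[z|z]|]]] /=; rewrite ?andbF //.
  by case/andP=> /eqP <- /eqP ->; rewrite eqxx.
- by rewrite Rsym vw.
- exact: vu.
- exact: vw.
- by rewrite eqxx in xy.
Qed.

End SquareOfD.

Lemma Dvs_w n full (i : 'I_n.+1) :
  Dvs n.+1 full (Some (inr i)) = ~~ (~~ full && (i == ord_max)).
Proof. by rewrite /= negb_and negbK. Qed.

Section StarEmbedding.
Variables (T : finType) (e : rel T).
Hypotheses (e_sym : symmetric e) (e_irr : irreflexive e) (e_tf : triangle_free e).
Variables (n' : nat) (c : {set T}) (L : 'I_n'.+1 -> {set T}).
Local Notation n := n'.+1.
Hypotheses (bc : biclique e c) (bL : forall i, biclique e (L i)) (L_inj : injective L).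
Hypotheses (cL : forall i, KBadj c (L i)) (LL : forall i j, i != j -> ~~ KBadj (L i) (L j)).

Lemma leaves_disjoint i j : i != j -> L i :&: L j = set0.
Proof.
move=> ij; have := LL i j ij; rewrite /KBadj negb_and !negbK => /orP[/eqP/L_inj ij'|/eqP //].
by rewrite ij' eqxx in ij.
Qed.

Lemma c_neq_L i : c != L i.
Proof. by case/andP: (cL i). Qed.

Lemma c_meets_L i : meets c (L i).
Proof. by case/andP: (cL i). Qed.

Definition p i : T := xchoose (set0Pn _ (c_meets_L i)).

Lemma p_cL i : p i \in c :&: L i.
Proof. exact: xchooseP. Qed.

Definition m i : {set T} := star e (p i).

Lemma m_spec i : [/\ biclique e (m i), covers e (m i) c, covers e (m i) (L i) & p i \in m i].
Proof.
have [A [B sc]] := biclique_sides e_sym e_irr e_tf bc.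
have [A' [B' sL]] := biclique_sides e_sym e_irr e_tf (bL i).
have := p_cL i; rewrite inE => /andP[pc pL].
have [bm mc] := star_covers e_sym e_irr e_tf sc pc.
have [_ mL] := star_covers e_sym e_irr e_tf sL pL.
by split=> //; apply: star_mem.
Qed.

Definition degenerate i : bool := (m i == c) || (m i == L i).

Lemma degenerate_covers i : degenerate i -> covers e (L i) c.
Proof.
have [_ mc mL _] := m_spec i.
case/orP=> /eqP mE; last by rewrite -mE.
by apply: (covers_sym e_sym e_irr e_tf bc); rewrite -mE.
Qed.

(* Distinct leaves are disjoint, so at most one of them covers c. *)
Lemma covering_leaf_unique i j : covers e (L i) c -> covers e (L j) c -> i = j.
Proof.
move=> ic jc; apply/eqP/negPn/negP=> ij.
by move: (covers_meet e_sym e_irr e_tf (bL i) ic jc); rewrite /meets leaves_disjoint ?eqxx.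
Qed.

Lemma m_neq_c i : ~~ degenerate i -> m i != c.
Proof. by apply: contraNN => mc; rewrite /degenerate mc. Qed.

Lemma m_neq_L i j : ~~ degenerate i -> m i != L j.
Proof.
move=> ndi; case: (eqVneq i j) => [<-|ij].
  by apply: contraNN ndi => mL; rewrite /degenerate mL orbT.
apply/eqP=> mL; have := leaves_disjoint _ _ ij; move/setP/(_ (p i)).
have [_ _ _ pm] := m_spec i; move: (p_cL i).
by rewrite !inE -mL pm => /andP[_ ->].
Qed.

(* Equal star bicliques m i = m j would be covered by both L i and L j. *)
Lemma m_inj : injective m.
Proof.
move=> i j mij; apply/eqP/negPn/negP=> ij.
have [bmi _ miL _] := m_spec i; have [bmj _ mjL _] := m_spec j.
have Li := covers_sym e_sym e_irr e_tf bmi miL.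
have Lj : covers e (L j) (m i).
  by rewrite mij; exact (covers_sym e_sym e_irr e_tf bmj mjL).
by move: (covers_meet e_sym e_irr e_tf (bL i) Li Lj); rewrite /meets leaves_disjoint ?eqxx.
Qed.

Lemma c_meets_m i : meets c (m i).
Proof.
have [_ _ _ pm] := m_spec i; move: (p_cL i); rewrite inE => /andP[pc _].
by apply/set0Pn; exists (p i); rewrite inE pc pm.
Qed.

Lemma m_meets_L i : meets (m i) (L i).
Proof.
have [_ _ _ pm] := m_spec i; move: (p_cL i); rewrite inE => /andP[_ pL].
by apply/set0Pn; exists (p i); rewrite inE pL pm.
Qed.

Lemma m_meets_covering P i : covers e P c -> meets (m i) P.
Proof. by have [bm mc _ _] := m_spec i; apply: covers_meet. Qed.

Section Embedding.
(* k is the only index allowed to be degenerate, and then only when w is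
   removed; in that case L k covers c.  The relabelling s moves k to the
   last position, where D_n^- lacks w. *)
Variables (full : bool) (k : 'I_n).
Hypotheses (deg_k : forall i, degenerate i -> ~~ full && (i == k))
           (k_covers : ~~ full -> covers e (L k) c).

Let s : 'I_n -> 'I_n := tperm k ord_max.
Let special (i : 'I_n) : bool := ~~ full && (i == ord_max).

Lemma special_s i : special i = ~~ full && (s i == k).
Proof.
by rewrite /special -[k in RHS](tpermR k ord_max) (inj_eq (can_inj (tpermK k ord_max))).
Qed.

Lemma nonspecial_nondeg i : ~~ special i -> ~~ degenerate (s i).
Proof. by rewrite special_s; apply: contraNN => /deg_k. Qed.

Lemma special_covers i : special i -> covers e (L (s i)) c.
Proof. by rewrite special_s => /andP[nf /eqP->]; apply: k_covers. Qed.

Definition emb (x : Dvert n) : {set T} :=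
  match x with
  | None => c
  | Some (inl i) => if special i then L (s i) else m (s i)
  | Some (inr i) => L (s i)
  end.

Lemma emb_biclique x : biclique e (emb x).
Proof. by case: x => [[i|i]|] //=; case: ifP => _ //; have [] := m_spec (s i). Qed.

Lemma emb_u_inj i j : emb (Some (inl i)) = emb (Some (inl j)) -> i = j.
Proof.
rewrite /=; have s_inj := can_inj (tpermK k ord_max).
case: ifP => si; case: ifP => sj.
- by move: si sj => /andP[_ /eqP->] /andP[_ /eqP->].
- by move/esym/eqP; rewrite (negbTE (m_neq_L _ _ (nonspecial_nondeg _ (negbT sj)))).
- by move/eqP; rewrite (negbTE (m_neq_L _ _ (nonspecial_nondeg _ (negbT si)))).
- by move/m_inj/s_inj.
Qed.

Lemma emb_inj x y : Dvs n full x -> Dvs n full y -> emb x = emb y -> x = y.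
Proof.
have s_inj := can_inj (tpermK k ord_max).
have c_u i : c != emb (Some (inl i)).
  by rewrite /=; case: ifP => si; rewrite ?c_neq_L // eq_sym m_neq_c ?nonspecial_nondeg ?si.
have u_w i j : Dvs n full (Some (inr j)) -> emb (Some (inl i)) != L (s j).
  rewrite Dvs_w -/(special j) => sj /=; case: ifP => si.
    by apply: contraNN sj => /eqP/L_inj/s_inj <-.
  by rewrite m_neq_L ?nonspecial_nondeg ?si.
case: x => [[i|i]|]; case: y => [[j|j]|] Dx Dy //.
- by move/emb_u_inj ->.
- by move/eqP; rewrite (negbTE (u_w _ _ Dy)).
- by move/esym/eqP; rewrite (negbTE (c_u i)).
- by move/esym/eqP; rewrite (negbTE (u_w _ _ Dx)).
- by move/L_inj/s_inj ->.
- by move/esym/eqP; rewrite /= (negbTE (c_neq_L _)).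
- by move/eqP; rewrite (negbTE (c_u j)).
- by move/eqP; rewrite /= (negbTE (c_neq_L _)).
Qed.

Lemma emb_meets x y : Dsq n full x y -> meets (emb x) (emb y).
Proof.
move: x y; apply: (@Dsq_edge n full [rel x y | meets (emb x) (emb y)]) =>
  /= [x y|i|i _|i j ij|i].
- by rewrite /= /meets setIC.
- by rewrite /=; case: ifP => _; rewrite ?c_meets_L ?c_meets_m.
- exact: c_meets_L.
- rewrite /=; case: ifP => si; case: ifP => sj.
  + by move: si sj ij => /andP[_ /eqP->] /andP[_ /eqP->]; rewrite eqxx.
  + by rewrite /meets setIC; apply: m_meets_covering; apply: special_covers.
  + by apply: m_meets_covering; apply: special_covers.
  + by have [_ mc _ _] := m_spec (s j); apply: m_meets_covering.
- by move=> Di /=; rewrite ifN ?m_meets_L // -Dvs_w.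
Qed.

Lemma emb_star i : exists x y, Dsq n full x y /\ emb x = c /\ emb y = L i.
Proof.
have si : s (s i) = i by apply: tpermK.
exists None; case sp: (special (s i)).
  by exists (Some (inl (s i))); rewrite /= sp si.
exists (Some (inr (s i))); split=> //=; last by rewrite si.
have Dw : Dvs n full (Some (inr (s i))) by rewrite Dvs_w -/(special _) sp.
by rewrite /Dsq Dw /=; apply/existsP; exists (Some (inl (s i))); rewrite /= eqxx.
Qed.

Lemma emb_spec :
  [/\ forall x, Dvs n full x -> biclique e (emb x),
      forall x y, Dvs n full x -> Dvs n full y -> emb x = emb y -> x = y,
      forall x y, Dsq n full x y -> KBadj (emb x) (emb y)
    & forall i, exists x y, Dsq n full x y /\ emb x = c /\ emb y = L i].
Proof.
split=> [x _|||]; [exact: emb_biclique | exact: emb_inj | | exact: emb_star].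
move=> x y Dxy; apply/andP; split; last exact: emb_meets.
case/and4P: Dxy => Dx Dy xy _; apply: contraNN xy => /eqP /(emb_inj _ _ Dx Dy) ->.
exact: eqxx.
Qed.

End Embedding.

Lemma star_embedding : exists (full : bool) (g : Dvert n -> {set T}),
  [/\ forall x, Dvs n full x -> biclique e (g x),
      forall x y, Dvs n full x -> Dvs n full y -> g x = g y -> x = y,
      forall x y, Dsq n full x y -> KBadj (g x) (g y)
    & forall i, exists x y, Dsq n full x y /\ g x = c /\ g y = L i].
Proof.
case: (pickP degenerate) => [k dk | nodeg].
  exists false, (emb false k); apply: emb_spec => [i di|_]; last exact: degenerate_covers.
  by rewrite (covering_leaf_unique (degenerate_covers _ di) (degenerate_covers _ dk)) eqxx.
by exists true, (emb true ord0); apply: emb_spec => // i; rewrite nodeg.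
Qed.

End StarEmbedding.

Theorem corollary4 (T : finType) (e : rel T)
  (e_sym : symmetric e) (e_irr : irreflexive e) (e_tf : triangle_free e)
  (n : nat) (hn : 1 <= n)
  (c : {set T}) (L : 'I_n -> {set T}) :
  biclique e c -> (forall i, biclique e (L i)) -> injective L ->
  (forall i, KBadj c (L i)) ->
  (forall i j, i != j -> ~~ KBadj (L i) (L j)) ->
  exists (full : bool) (g : Dvert n -> {set T}),
    [/\ forall x, Dvs n full x -> biclique e (g x),
        forall x y, Dvs n full x -> Dvs n full y -> g x = g y -> x = y,
        forall x y, Dsq n full x y -> KBadj (g x) (g y)
      & forall i, exists x y, Dsq n full x y /\ g x = c /\ g y = L i].
Proof.
case: n hn L => [//|n'] _ L bc bL L_inj cL LL.
exact: (star_embedding e_sym e_irr e_tf bc bL L_inj cL LL).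
Qed.
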